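(* Let $\kappa_1,\kappa_2$ be real constants and $F$ a smooth real function of one variable. Consider the equation $$\sigma_{rr}+(\kappa_1+\kappa_2)\frac{\sigma_r}{r}-\kappa_1(1-\kappa_2)\frac{\sigma}{r^2}=\big(F(\sigma)\big)_{tt}$$ for a smooth function $\sigma(r,t)$, $r>0$. Then every smooth solution satisfies the four conservation laws $\partial_r T^r+\partial_t T^t=0$ with $(T^r,T^t)$ given by $$\Big(r^{\kappa_2-1}(r\sigma_r+\kappa_1\sigma),\ -r^{\kappa_2}\sigma_tF'(\sigma)\Big),$$ $$\Big(t\,r^{\kappa_2-1}(r\sigma_r+\kappa_1\sigma),\ r^{\kappa_2}\big(F(\sigma)-t\sigma_tF'(\sigma)\big)\Big),$$ $$\Big(r^{\kappa_1}\big(r\sigma_r-(1-\kappa_2)\sigma\big),\ -r^{1+\kappa_1}\sigma_tF'(\sigma)\Big),$$ $$\Big(t\,r^{\kappa_1}\big(r\sigma_r-(1-\kappa_2)\sigma\big),\ r^{1+\kappa_1}\big(F(\sigma)-t\sigma_tF'(\sigma)\big)\Big),$$ corresponding to the multipliers $r^{\kappa_2}$, $tr^{\kappa_2}$, $r^{1+\kappa_1}$, $tr^{1+\kappa_1}$, respectively.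
   Context: Subscripts denote partial derivatives; $F'$ is the derivative of $F$. *)

From Stdlib Require Import Reals List.
From Coquelicot Require Import Coquelicot.
Open Scope R_scope.

Definition pr (f : R -> R -> R) (r t : R) : R := Derive (fun x => f x t) r.
Definition pt (f : R -> R -> R) (r t : R) : R := Derive (fun y => f r y) t.

Fixpoint dw (w : list bool) (f : R -> R -> R) : R -> R -> R :=
  match w with
  | nil => f
  | b :: w' => if b then pr (dw w' f) else pt (dw w' f)
  end.

Definition smooth_half (f : R -> R -> R) : Prop :=
  forall (w : list bool) (r t : R), 0 < r ->
    ex_derive (fun x => dw w f x t) r /\
    ex_derive (fun y => dw w f r y) t /\
    continuity_2d_pt (dw w f) r t.

Definition smooth1 (F : R -> R) : Prop :=
  forall (n : nat) (x : R), ex_derive (Derive_n F n) x.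

Definition divergence (Tr Tt : R -> R -> R) (r t : R) : R :=
  pr Tr r t + pt Tt r t.

Section Currents.
Variables (k1 k2 : R) (F : R -> R) (sigma : R -> R -> R).

Definition T1r r t := Rpower r (k2 - 1) * (r * pr sigma r t + k1 * sigma r t).
Definition T1t r t := - Rpower r k2 * pt sigma r t * Derive F (sigma r t).

Definition T2r r t := t * Rpower r (k2 - 1) * (r * pr sigma r t + k1 * sigma r t).
Definition T2t r t :=
  Rpower r k2 * (F (sigma r t) - t * pt sigma r t * Derive F (sigma r t)).

Definition T3r r t := Rpower r k1 * (r * pr sigma r t - (1 - k2) * sigma r t).
Definition T3t r t := - Rpower r (1 + k1) * pt sigma r t * Derive F (sigma r t).

Definition T4r r t := t * Rpower r k1 * (r * pr sigma r t - (1 - k2) * sigma r t).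
Definition T4t r t :=
  Rpower r (1 + k1) * (F (sigma r t) - t * pt sigma r t * Derive F (sigma r t)).
End Currents.

From Stdlib Require Import Reals List Lra.
From Coquelicot Require Import Coquelicot.
Open Scope R_scope.

(* Each current has divergence equal to its multiplier times the residual
   L sigma - (F sigma)_tt of the equation, L being the operator on its left.
   For the r-components this is the integrating-factor identity
     d/dr [r^(a-1) (r sigma_r + c sigma)]
       = r^a (sigma_rr + (a+c) sigma_r / r + c (a-1) sigma / r^2),
   which gives L for (a, c) = (k2, k1) and (a, c) = (1 + k1, k2 - 1).  For the
   t-components, sigma_t F'(sigma) = (F sigma)_t, so -r^a (F sigma)_t has
   t-derivative -r^a (F sigma)_tt and r^a (F sigma - t (F sigma)_t) has
   t-derivative -t r^a (F sigma)_tt. *)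

Definition radial_op (k1 k2 : R) (sigma : R -> R -> R) (r t : R) : R :=
  pr (pr sigma) r t + (k1 + k2) * pr sigma r t / r
    - k1 * (1 - k2) * sigma r t / r ^ 2.

Lemma is_derive_Rpower (a r : R) :
  0 < r -> is_derive (fun x => Rpower x a) r (a * Rpower r (a - 1)).
Proof. intros Hr; apply is_derive_Reals, derivable_pt_lim_power, Hr. Qed.

Lemma Rpower_sub1 (a r : R) : 0 < r -> Rpower r (a - 1) = Rpower r a / r.
Proof.
  intros Hr; unfold Rminus.
  rewrite Rpower_plus, Rpower_Ropp, Rpower_1 by exact Hr; reflexivity.
Qed.

Section RadialCurrents.
Variables (sigma : R -> R -> R) (r t : R).
Hypothesis Hr : 0 < r.
Hypothesis Hsigma : ex_derive (fun x => sigma x t) r.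
Hypothesis Hsigma_r : ex_derive (fun x => pr sigma x t) r.

Lemma pr_radial_current (a c : R) :
  pr (fun x y => Rpower x (a - 1) * (x * pr sigma x y + c * sigma x y)) r t
  = Rpower r a * (pr (pr sigma) r t + (a + c) * pr sigma r t / r
                  + c * (a - 1) * sigma r t / r ^ 2).
Proof.
  pose proof (is_derive_Rpower (a - 1) r Hr) as HP.
  unfold pr at 1; apply is_derive_unique; auto_derive.
  - repeat split; [eexists; exact HP | exact Hsigma_r | exact Hsigma].
  - rewrite (is_derive_unique (fun x : R => Rpower x (a - 1)) r _ HP).
    change (Derive (fun x => pr sigma x t) r) with (pr (pr sigma) r t).
    change (Derive (fun x => sigma x t) r) with (pr sigma r t).
    rewrite !(Rpower_sub1 _ r Hr).
    field; lra.
Qed.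

Lemma pr_T1r (k1 k2 : R) :
  pr (T1r k1 k2 sigma) r t = Rpower r k2 * radial_op k1 k2 sigma r t.
Proof.
  change (T1r k1 k2 sigma)
    with (fun x y => Rpower x (k2 - 1) * (x * pr sigma x y + k1 * sigma x y)).
  rewrite pr_radial_current; unfold radial_op, Rminus, Rdiv; ring.
Qed.

Lemma pr_T3r (k1 k2 : R) :
  pr (T3r k1 k2 sigma) r t = Rpower r (1 + k1) * radial_op k1 k2 sigma r t.
Proof.
  transitivity (pr (fun x y =>
    Rpower x ((1 + k1) - 1) * (x * pr sigma x y + (k2 - 1) * sigma x y)) r t).
  - unfold pr at 1 2; apply Derive_ext; intros x; unfold T3r.
    replace (1 + k1 - 1) with k1 by ring; ring.
  - rewrite pr_radial_current; unfold radial_op, Rminus, Rdiv; ring.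
Qed.

End RadialCurrents.

Lemma pr_T2r (k1 k2 : R) (sigma : R -> R -> R) (r t : R) :
  pr (T2r k1 k2 sigma) r t = t * pr (T1r k1 k2 sigma) r t.
Proof.
  unfold pr; rewrite <- Derive_scal; apply Derive_ext; intros x.
  unfold T1r, T2r; ring.
Qed.

Lemma pr_T4r (k1 k2 : R) (sigma : R -> R -> R) (r t : R) :
  pr (T4r k1 k2 sigma) r t = t * pr (T3r k1 k2 sigma) r t.
Proof.
  unfold pr; rewrite <- Derive_scal; apply Derive_ext; intros x.
  unfold T3r, T4r; ring.
Qed.

Section TimeCurrents.
Variables (F : R -> R) (sigma : R -> R -> R) (r : R).
Hypothesis HF : forall x, ex_derive F x.
Hypothesis Hsigma_t : forall t, ex_derive (fun y => sigma r y) t.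

Let Fs (x y : R) : R := F (sigma x y).

Lemma pt_comp (t : R) : pt Fs r t = pt sigma r t * Derive F (sigma r t).
Proof.
  apply is_derive_unique, (is_derive_comp F (fun y => sigma r y)).
  - apply Derive_correct, HF.
  - apply Derive_correct, Hsigma_t.
Qed.

Lemma ex_derive_pt_comp (t : R) :
  ex_derive (Derive F) (sigma r t) -> ex_derive (fun y => pt sigma r y) t ->
  ex_derive (fun y => pt Fs r y) t.
Proof.
  intros HF' Hsigma_tt.
  apply (ex_derive_ext (fun y => pt sigma r y * Derive F (sigma r y))).
  - intros y; symmetry; apply pt_comp.
  - apply ex_derive_mult; [exact Hsigma_tt |].
    apply (ex_derive_comp (Derive F) (fun y => sigma r y)); [exact HF' | apply Hsigma_t].
Qed.

Lemma pt_T1t (a t : R) : pt (T1t a F sigma) r t = - Rpower r a * pt (pt Fs) r t.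
Proof.
  unfold pt at 1 2; rewrite <- Derive_scal; apply Derive_ext; intros y.
  unfold T1t; rewrite pt_comp; ring.
Qed.

Lemma pt_T2t (a t : R) :
  ex_derive (fun y => pt Fs r y) t ->
  pt (T2t a F sigma) r t = - Rpower r a * (t * pt (pt Fs) r t).
Proof.
  intros HFs_t.
  assert (E : forall y, Rpower r a * (Fs r y - y * pt Fs r y) = T2t a F sigma r y).
  { intros y; unfold T2t, Fs; rewrite pt_comp; ring. }
  apply is_derive_unique, (is_derive_ext _ _ _ _ E); auto_derive.
  - split; [apply (ex_derive_comp F (fun y => sigma r y)); auto | auto].
  - change (Derive (fun x => Fs r x) t) with (pt Fs r t).
    change (Derive (fun x => pt Fs r x) t) with (pt (pt Fs) r t).
    ring.
Qed.

End TimeCurrents.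

Theorem mainTheorem2 (k1 k2 : R) (F : R -> R) (sigma : R -> R -> R)
  (HF : smooth1 F) (Hs : smooth_half sigma)
  (Heq : forall r t : R, 0 < r ->
     pr (pr sigma) r t + (k1 + k2) * pr sigma r t / r
       - k1 * (1 - k2) * sigma r t / r ^ 2
     = pt (pt (fun r' t' => F (sigma r' t'))) r t) :
  forall r t : R, 0 < r ->
    divergence (T1r k1 k2 sigma) (T1t k2 F sigma) r t = 0 /\
    divergence (T2r k1 k2 sigma) (T2t k2 F sigma) r t = 0 /\
    divergence (T3r k1 k2 sigma) (T3t k1 F sigma) r t = 0 /\
    divergence (T4r k1 k2 sigma) (T4t k1 F sigma) r t = 0.
Proof.
  intros r t Hr.
  pose proof (proj1 (Hs nil r t Hr)) as Hsigma.
  pose proof (proj1 (Hs (true :: nil) r t Hr)) as Hsigma_r.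
  pose proof (fun y => proj1 (proj2 (Hs nil r y Hr))) as Hsigma_t.
  pose proof (proj1 (proj2 (Hs (false :: nil) r t Hr))) as Hsigma_tt.
  pose proof (HF 0%nat) as HF0.
  pose proof (ex_derive_pt_comp F sigma r HF0 Hsigma_t t (HF 1%nat _) Hsigma_tt)
    as HFs_t.
  pose proof (Heq r t Hr : radial_op k1 k2 sigma r t = _) as HL.
  change (T3t k1 F sigma) with (T1t (1 + k1) F sigma).
  change (T4t k1 F sigma) with (T2t (1 + k1) F sigma).
  unfold divergence.
  rewrite pr_T2r, pr_T4r, pr_T1r, pr_T3r, !pt_T1t, !pt_T2t, HL by assumption.
  repeat split; ring.
Qed.
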